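(* Let $D$ be a division algebra and let $\sigma_1,\ldots,\sigma_n$ be pairwise commuting automorphisms of $D$. If the tuple $(\sigma_1,\ldots,\sigma_r)$ is not automorphically normalizable over $D$ for some integer $r\le n$, then the tuple $(\sigma_1,\ldots,\sigma_n)$ is not automorphically normalizable over $D$.
   Context: All rings are associative with unity. For commuting automorphisms $\tau_1,\ldots,\tau_k$ of $D$, $D[t_1,\ldots,t_k;\tau_1,\ldots,\tau_k]$ is the skew polynomial ring in pairwise commuting variables with $t_ia=\tau_i(a)t_i$ for $a\in D$. For a ring $S\supseteq D$, $a\in S$ is automorphic over $D$ with respect to $\tau$ if $ab=\tau(b)a$ for all $b\in D$. Commuting $a_1,\ldots,a_m\in S$ are (left) algebraically independent over $D$ if monomials in them are left linearly independent over $D$. $S$ is automorphically normalizable over $D$ if there exist $m\ge0$ and commuting $a_1,\ldots,a_m\in S$, automorphic over $D$ with respect to pairwise commuting automorphisms, left algebraically independent over $D$, such that $S$ is finitely generated as a left module over the subring $D[a_1,\ldots,a_m]$ generated by $D\cup\{a_1,\ldots,a_m\}$. A tuple $(\tau_1,\ldots,\tau_k)$ of commuting automorphisms is automorphically normalizable over $D$ if every quotient of $D[t_1,\ldots,t_k;\tau_1,\ldots,\tau_k]$ by a proper two-sided ideal is automorphically normalizable over $D$. *)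

From HB Require Import structures.
From mathcomp Require Import all_boot all_order all_algebra.
From mathcomp Require Import mpoly.
Set Implicit Arguments.
Unset Strict Implicit.
Unset Printing Implicit Defensive.
Import GRing.Theory.
Local Open Scope ring_scope.

Definition is_division_ring (D : unitRingType) : Prop :=
  forall x : D, x != 0 -> x \is a GRing.unit.

Definition is_ring_automorphism (D : nzRingType) (s : {rmorphism D -> D}) : Prop :=
  bijective s.

Definition commuting_automorphisms (D : nzRingType) (k : nat)
    (s : 'I_k -> {rmorphism D -> D}) : Prop :=
  (forall i, is_ring_automorphism (s i)) /\
  (forall i j (x : D), s i (s j x) = s j (s i x)).

Section Normalizable.
Variables (D : nzRingType) (S : nzRingType) (f : D -> S).

Definition smonom (m : nat) (a : 'I_m -> S) (e : 'X_{1..m}) : S :=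
  \prod_(i < m) a i ^+ e i.

Definition automorphic (tau : D -> D) (a : S) : Prop :=
  forall b : D, a * f b = f (tau b) * a.

Definition left_alg_indep (m : nat) (a : 'I_m -> S) : Prop :=
  forall (s : seq 'X_{1..m}) (c : 'X_{1..m} -> D),
    uniq s -> \sum_(e <- s) f (c e) * smonom a e = 0 ->
    forall e, e \in s -> c e = 0.

Inductive in_gen_subring (m : nat) (a : 'I_m -> S) : S -> Prop :=
  | gsub_D (d : D) : in_gen_subring a (f d)
  | gsub_a (i : 'I_m) : in_gen_subring a (a i)
  | gsub_0 : in_gen_subring a 0
  | gsub_1 : in_gen_subring a 1
  | gsub_opp x : in_gen_subring a x -> in_gen_subring a (- x)
  | gsub_add x y : in_gen_subring a x -> in_gen_subring a y ->
      in_gen_subring a (x + y)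
  | gsub_mul x y : in_gen_subring a x -> in_gen_subring a y ->
      in_gen_subring a (x * y).

Definition fin_gen_left_module (m : nat) (a : 'I_m -> S) : Prop :=
  exists gens : seq S, forall x : S,
    exists r : 'I_(size gens) -> S,
      (forall j, in_gen_subring a (r j)) /\
      x = \sum_(j < size gens) r j * gens`_j.

Definition automorphically_normalizable : Prop :=
  exists (m : nat) (a : 'I_m -> S) (tau : 'I_m -> {rmorphism D -> D}),
    [/\ commuting_automorphisms tau,
        (forall i j, a i * a j = a j * a i),
        (forall i, automorphic (tau i) (a i)),
        left_alg_indep a &
        fin_gen_left_module a].

End Normalizable.

(* Its elements are represented by {mpoly D[k]} (finitely supported     *)
(* D-valued coefficient functions on exponent vectors, written          *)
(* sum_e c_e t^e with coefficients on the left); addition is that of    *)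
(* {mpoly D[k]}, and the (twisted) multiplication is skew_mul below,    *)
(* determined by t_i d = tau_i(d) t_i:                                  *)
(*    (c t^a)(d t^b) = c tau^a(d) t^(a+b).                              *)

Section SkewPoly.
Variables (D : nzRingType) (k : nat) (tau : 'I_k -> {rmorphism D -> D}).

Definition tau_pow (e : 'X_{1..k}) : D -> D :=
  foldr (fun i g => iter (e i) (tau i) \o g) id (enum 'I_k).

Definition skew_mul (p q : {mpoly D[k]}) : {mpoly D[k]} :=
  \sum_(a <- msupp p) \sum_(b <- msupp q)
     (p@_a * tau_pow a q@_b) *: 'X_[(a + b)%MM].

Definition skew_one : {mpoly D[k]} := 1%:MP.

Definition skew_const (d : D) : {mpoly D[k]} := d%:MP.

(* pi : D[t;tau] -> S is a surjective ring homomorphism; quotients of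
   D[t;tau] by proper two-sided ideals are exactly (up to isomorphism)
   the nonzero rings S admitting such a pi (S = D[t;tau]/ker pi). *)
Definition skew_quotient_map (S : nzRingType) (pi : {mpoly D[k]} -> S) : Prop :=
  [/\ forall p q, pi (p + q) = pi p + pi q,
      pi skew_one = 1,
      forall p q, pi (skew_mul p q) = pi p * pi q &
      forall y : S, exists p, pi p = y].

Definition tuple_automorphically_normalizable : Prop :=
  forall (S : nzRingType) (pi : {mpoly D[k]} -> S),
    skew_quotient_map pi ->
    automorphically_normalizable (fun d => pi (skew_const d)).

End SkewPoly.

From HB Require Import structures.
From mathcomp Require Import all_boot all_order all_algebra.
From mathcomp Require Import mpoly.
From Stdlib Require Import FunctionalExtensionality.
Set Implicit Arguments.
Unset Strict Implicit.
Unset Printing Implicit Defensive.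
Import GRing.Theory.
Local Open Scope ring_scope.

(* D[t_1..t_r; sigma_1..sigma_r] is the quotient of D[t_1..t_n; sigma_1..sigma_n]
   by the ideal generated by t_(r+1), ..., t_n, so every proper quotient of the
   former is also one of the latter, with the same copy of D inside.  Concretely,
   a quotient map pi of the smaller ring extends to the larger one by evaluation
   at pi(t_1), ..., pi(t_r), 0, ..., 0: these elements commute and twist D by the
   sigma_i, which is all the universal property of skew polynomial rings needs. *)

Section SkewMonomial.
Variables (D : nzRingType) (k : nat) (tau : 'I_k -> {rmorphism D -> D}).

Lemma tau_pow_fixed (e : 'X_{1..k}) x :
  (forall i, tau i x = x) -> tau_pow tau e x = x.
Proof.
move=> fix_x; rewrite /tau_pow; elim: (enum 'I_k) => //= i s ->.
by elim: (e i) => //= m ->.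
Qed.

Lemma tau_pow0 e : tau_pow tau e 0 = 0.
Proof. by apply: tau_pow_fixed => i; rewrite rmorph0. Qed.

Lemma tau_pow1 e : tau_pow tau e 1 = 1.
Proof. by apply: tau_pow_fixed => i; rewrite rmorph1. Qed.

Lemma tau_pow_mnm0 d : tau_pow tau 0%MM d = d.
Proof. by rewrite /tau_pow; elim: (enum 'I_k) => //= i s ->; rewrite mnm0E. Qed.

Lemma tau_powU j d : tau_pow tau U_(j)%MM d = tau j d.
Proof.
suff foldrU s : uniq s -> foldr (fun i g => iter (U_(j)%MM i) (tau i) \o g) id s d
                          = if j \in s then tau j d else d.
  by rewrite /tau_pow foldrU ?enum_uniq ?mem_enum.
elim: s => //= i s IHs /andP[i_notin_s s_uniq]; rewrite IHs // mnm1E in_cons.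
by have [-> | //] := eqVneq j i; rewrite (negPf i_notin_s).
Qed.

Lemma skew_mulZX c d (a b : 'X_{1..k}) :
  skew_mul tau (c *: 'X_[a]) (d *: 'X_[b]) = (c * tau_pow tau a d) *: 'X_[a + b].
Proof.
have [-> | c_neq0] := eqVneq c 0.
  by rewrite /skew_mul scale0r msupp0 big_nil mul0r scale0r.
have [-> | d_neq0] := eqVneq d 0.
  rewrite /skew_mul scale0r msupp0 tau_pow0 mulr0 scale0r.
  by rewrite big1 // => a' _; rewrite big_nil.
by rewrite /skew_mul !msuppMCX // !big_seq1 !mcoeffZ !mcoeffX !eqxx !mulr1.
Qed.

Lemma skew_mulZX1 c (a b : 'X_{1..k}) :
  skew_mul tau (c *: 'X_[a]) 'X_[b] = c *: 'X_[a + b].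
Proof. by rewrite -[X in skew_mul _ _ X]scale1r skew_mulZX tau_pow1 mulr1. Qed.

Lemma skew_mulXZ d (a b : 'X_{1..k}) :
  skew_mul tau 'X_[a] (d *: 'X_[b]) = tau_pow tau a d *: 'X_[a + b].
Proof. by rewrite -[X in skew_mul _ X _]scale1r skew_mulZX mul1r. Qed.

Lemma skew_mulX (a b : 'X_{1..k}) : skew_mul tau 'X_[a] 'X_[b] = 'X_[a + b].
Proof. by rewrite -[X in skew_mul _ X _]scale1r skew_mulZX1 scale1r. Qed.

Lemma skew_constE (c : D) : skew_const k c = c *: 'X_[0].
Proof. by rewrite /skew_const -alg_mpolyC mpolyX0. Qed.

End SkewMonomial.

Section SkewEvaluation.
Variables (D S : nzRingType) (k : nat) (tau : 'I_k -> {rmorphism D -> D}).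
Variables (f : {rmorphism D -> S}) (x : 'I_k -> S).
Hypothesis x_comm : forall i j, x i * x j = x j * x i.
Hypothesis x_automorphic : forall i, automorphic f (tau i) (x i).

Lemma mmap1_automorphic a : automorphic f (tau_pow tau a) (mmap1 x a).
Proof.
move=> d; have enum_ord : enum 'I_k = index_enum 'I_k by rewrite enumT /index_enum unlock.
rewrite /mmap1 /tau_pow enum_ord; elim: (index_enum 'I_k) => [|i s IHs] /=.
  by rewrite !big_nil mul1r mulr1.
rewrite !big_cons -mulrA IHs !mulrA; congr (_ * _).
elim: (a i) => [|e IHe] /=; first by rewrite !expr0 mul1r mulr1.
by rewrite exprS -mulrA IHe mulrA x_automorphic -mulrA -exprS.
Qed.

Lemma mmap1D a b : mmap1 x (a + b) = mmap1 x a * mmap1 x b.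
Proof.
rewrite /mmap1 -prodrM_comm => [|i j _ _]; last exact/commrX/commr_sym/commrX/x_comm.
by apply: eq_bigr => i _; rewrite mnmDE exprD.
Qed.

Lemma mmap_skew_mul p q : mmap f x (skew_mul tau p q) = mmap f x p * mmap f x q.
Proof.
rewrite {2}/mmap mulr_suml raddf_sum; apply: eq_bigr => a _.
rewrite mulr_sumr raddf_sum; apply: eq_bigr => b _.
rewrite /= mmapZ mmapX mmap1D rmorphM !mulrA; congr (_ * _); rewrite -!mulrA.
by rewrite mmap1_automorphic.
Qed.

Lemma mmap_skew_quotient_map :
  (forall y, exists p, mmap f x p = y) -> skew_quotient_map tau (mmap f x).
Proof.
move=> surj; split; [exact: raddfD | | exact: mmap_skew_mul | exact: surj].
by rewrite /skew_one mmapC /= rmorph1.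
Qed.

End SkewEvaluation.

Section SkewQuotientMap.
Variables (D : nzRingType) (k : nat) (tau : 'I_k -> {rmorphism D -> D}).
Variables (S : nzRingType) (pi : {mpoly D[k]} -> S).
Hypothesis pi_quot : skew_quotient_map tau pi.

Lemma skew_quotient_map_additive : additive pi.
Proof.
case: pi_quot => piD _ _ _ p q; apply/eqP; rewrite eq_sym subr_eq -piD.
by rewrite subrK.
Qed.

#[local] HB.instance Definition _ :=
  GRing.isZmodMorphism.Build _ _ pi skew_quotient_map_additive.

Definition quot_const (d : D) : S := pi (skew_const k d).

Lemma quot_const_additive : additive quot_const.
Proof. by move=> c d; rewrite /quot_const /skew_const raddfB raddfB. Qed.

Lemma quot_const_monoid_morphism : monoid_morphism quot_const.
Proof.
case: pi_quot => _ pi1 piM _; split=> [// | c d].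
by rewrite /quot_const -piM !skew_constE skew_mulZX tau_pow_mnm0 addm0.
Qed.

#[local] HB.instance Definition _ :=
  GRing.isZmodMorphism.Build _ _ quot_const quot_const_additive.
#[local] HB.instance Definition _ :=
  GRing.isMonoidMorphism.Build _ _ quot_const quot_const_monoid_morphism.

Lemma quot_scaleX c m : pi (c *: 'X_[m]) = quot_const c * pi 'X_[m].
Proof.
case: pi_quot => _ _ piM _.
by rewrite /quot_const -piM skew_constE skew_mulZX1 add0m.
Qed.

Lemma quot_XD a b : pi 'X_[a + b] = pi 'X_[a] * pi 'X_[b].
Proof.
case: pi_quot => _ _ piM _.
by rewrite -piM skew_mulX.
Qed.

Lemma quot_X m : pi 'X_[m] = mmap1 (fun i => pi 'X_i) m.
Proof.
have pi_X0 : pi 'X_[0] = 1 by rewrite mpolyX0; case: pi_quot.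
rewrite {1}[m]multinomUE_id (big_morph _ quot_XD pi_X0); apply: eq_bigr => i _.
by elim: (m i) => [|e IHe]; rewrite ?mulm0n ?expr0 // mulmS quot_XD IHe exprS.
Qed.

Lemma skew_quotient_mapE p : pi p = mmap quot_const (fun i => pi 'X_i) p.
Proof.
rewrite {1}[p]mpolyE raddf_sum; apply: eq_bigr => m _.
by rewrite /= quot_scaleX quot_X.
Qed.

Lemma quot_X_comm i j : pi 'X_i * pi 'X_j = pi 'X_j * pi 'X_i.
Proof. by rewrite -!quot_XD addmC. Qed.

Lemma quot_X_automorphic i : automorphic quot_const (tau i) (pi 'X_i).
Proof.
case: pi_quot => _ _ piM _ d; rewrite /quot_const -!piM !skew_constE.
by rewrite skew_mulXZ skew_mulZX1 tau_powU addm0 add0m.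
Qed.

End SkewQuotientMap.

Section PaddedQuotientMap.
Variables (D : nzRingType) (n r : nat) (hrn : (r <= n)%N).
Variables (sigma : 'I_n -> {rmorphism D -> D}) (S : nzRingType).
Variables (pi : {mpoly D[r]} -> S).
Hypothesis pi_quot : skew_quotient_map (fun j => sigma (widen_ord hrn j)) pi.

#[local] HB.instance Definition _ :=
  GRing.isZmodMorphism.Build _ _ (quot_const pi) (quot_const_additive pi_quot).
#[local] HB.instance Definition _ :=
  GRing.isMonoidMorphism.Build _ _ (quot_const pi) (quot_const_monoid_morphism pi_quot).

Definition padded_gen (i : 'I_n) : S :=
  if insub (val i) is Some j then pi 'X_j else 0.

Lemma padded_gen_widen j : padded_gen (widen_ord hrn j) = pi 'X_j.
Proof. by rewrite /padded_gen valK. Qed.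

Lemma padded_gen_comm i i' :
  padded_gen i * padded_gen i' = padded_gen i' * padded_gen i.
Proof.
rewrite /padded_gen; case: insubP => [j _ _ | _]; last by rewrite mul0r mulr0.
case: insubP => [j' _ _ | _]; last by rewrite mul0r mulr0.
exact: quot_X_comm pi_quot j j'.
Qed.

Lemma padded_gen_automorphic i : automorphic (quot_const pi) (sigma i) (padded_gen i).
Proof.
move=> d; rewrite /padded_gen.
case: insubP => [j _ val_j | _]; last by rewrite mul0r mulr0.
have -> : i = widen_ord hrn j by apply: val_inj.
exact: quot_X_automorphic pi_quot j d.
Qed.

Lemma padded_eval_surj y : exists p, mmap (quot_const pi) padded_gen p = y.
Proof.
pose im y := exists p, mmap (quot_const pi) padded_gen p = y.
have imD y1 y2 : im y1 -> im y2 -> im (y1 + y2).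
  by move=> [p1 <-] [p2 <-]; exists (p1 + p2); rewrite raddfD.
have imM y1 y2 : im y1 -> im y2 -> im (y1 * y2).
  move=> [p1 <-] [p2 <-]; exists (skew_mul sigma p1 p2).
  exact: mmap_skew_mul padded_gen_comm padded_gen_automorphic p1 p2.
have imC d : im (quot_const pi d) by exists d%:MP; rewrite mmapC.
have imX j : im (pi 'X_j).
  by exists 'X_(widen_ord hrn j); rewrite mmapX mmap1U padded_gen_widen.
have im0 : im 0 by exists 0; rewrite raddf0.
have im1 : im 1 by rewrite -(rmorph1 (quot_const pi)); apply: imC.
suff im_pi p : im (pi p) by case: pi_quot => _ _ _ /(_ y) [p <-]; apply: im_pi.
rewrite (skew_quotient_mapE pi_quot) /mmap; apply: (big_ind im im0 imD) => m _.
apply: (imM); first exact: imC.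
apply: (big_ind im im1 imM) => j _.
by elim: (m j) => [|e IHe]; rewrite ?expr0 // exprS; apply: imM.
Qed.

Lemma skew_quotient_map_pad :
  exists2 pin : {mpoly D[n]} -> S, skew_quotient_map sigma pin &
    forall d, pin (skew_const n d) = pi (skew_const r d).
Proof.
exists (mmap (quot_const pi) padded_gen); last by move=> d; rewrite mmapC.
exact: mmap_skew_quotient_map padded_gen_comm padded_gen_automorphic padded_eval_surj.
Qed.

End PaddedQuotientMap.

Theorem proposition5p2 (D : unitRingType) (n : nat)
    (sigma : 'I_n -> {rmorphism D -> D}) (r : nat) (hrn : (r <= n)%N) :
  is_division_ring D ->
  commuting_automorphisms sigma ->
  ~ tuple_automorphically_normalizable
      (fun i : 'I_r => sigma (widen_ord hrn i)) ->
  ~ tuple_automorphically_normalizable sigma.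
Proof.
move=> _ _ not_normalizable_r normalizable_n; apply: not_normalizable_r => S pi pi_quot.
have [pin pin_quot pin_const] := skew_quotient_map_pad pi_quot.
have <- : (fun d => pin (skew_const n d)) = (fun d => pi (skew_const r d)).
  by apply: functional_extensionality => d; apply: pin_const.
exact: normalizable_n.
Qed.
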